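(* Let $\mathbb{H}$ be a real Hilbert space, let $\mathbf{x}$ be a random vector in $\mathbb{H}$ with $\mathbb{E}[\|\mathbf{x}\|^2]<\infty$, and let $\mathcal{S}$ be the operator $\mathcal{S}\boldsymbol{\theta}=\mathbb{E}[\langle\boldsymbol{\theta},\mathbf{x}\rangle\mathbf{x}]$. Assume $\mathcal{S}$ has an orthonormal basis $(\mathbf{e}_i)$ of eigenvectors with eigenvalues $\lambda_i$ satisfying $0<\lambda_i<\tfrac12$ for all $i$. Let $\gamma\in(0,1)$ and $\mathcal{T}=\mathrm{Id}-\gamma\mathcal{S}$. Let $\boldsymbol{\theta}\in\mathbb{H}$, $\beta\in\mathbb{R}$, and let $(t_n)_{n\ge1}$ be a sequence of positive numbers with $\sum_{n\ge1}\frac{1}{n t_n}<\infty$. If $\|\mathcal{T}^n\boldsymbol{\theta}\|^2\le \frac{1}{n^\beta t_n}$ for every $n\ge1$, then $\|\boldsymbol{\theta}\|_\beta^2<\infty$.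
   Context: For $\boldsymbol{\theta}=\sum_i\theta_i\mathbf{e}_i$ and $\beta\in\mathbb{R}$, $\|\boldsymbol{\theta}\|_\beta^2:=\langle\boldsymbol{\theta},\mathcal{S}^{-\beta}\boldsymbol{\theta}\rangle=\sum_i\lambda_i^{-\beta}\theta_i^2\in[0,\infty]$, where $\mathcal{S}^{\kappa}\boldsymbol{\theta}=\sum_i\lambda_i^{\kappa}\theta_i\mathbf{e}_i$. Note $\mathcal{T}^n\boldsymbol{\theta}$ equals the expectation $\mathbb{E}[\boldsymbol{\theta}(n)]$ of the random iteration $\boldsymbol{\theta}(0)=\boldsymbol{\theta}$, $\boldsymbol{\theta}(k+1)=\boldsymbol{\theta}(k)-\gamma\langle\boldsymbol{\theta}(k),\mathbf{x}(k)\rangle\mathbf{x}(k)$ with $\mathbf{x}(k)$ i.i.d. copies of $\mathbf{x}$. *)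

From HB Require Import structures.
From mathcomp Require Import all_boot all_order all_algebra.
From mathcomp Require Import all_classical all_reals all_analysis.
Set Implicit Arguments. Unset Strict Implicit. Unset Printing Implicit Defensive.
Import Order.TTheory GRing.Theory Num.Theory.
Import numFieldNormedType.Exports.
Local Open Scope ring_scope.

(* A complete normed space whose norm comes from such an inner product
   is a real Hilbert space. *)
Definition inner_product_of_norm (R : realType) (V : normedModType R)
  (ip : V -> V -> R) : Prop :=
  [/\ forall u v, ip u v = ip v u,
      forall (a : R) (u v w : V), ip (a *: u + v) w = a * ip u w + ip v w
    & forall v, `|v| ^+ 2 = ip v v].

Definition orthonormal_basis (R : realType) (V : normedModType R)
  (ip : V -> V -> R) (I : Type) (e : I -> V) : Prop :=
  (forall i j, ip (e i) (e j) = if pselect (i = j) then 1 else 0) /\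
  (forall v, (forall i, ip v (e i) = 0) -> v = 0).

Definition borel_measurable_fun d (Om : measurableType d) (V : topologicalType)
  (x : Om -> V) : Prop :=
  forall U : set V, open U -> measurable (x @^-1` U).

From HB Require Import structures.
From mathcomp Require Import all_boot all_order all_algebra.
From mathcomp Require Import all_classical all_reals all_analysis.
From mathcomp Require Import ring lra.
Import Order.TTheory GRing.Theory Num.Theory.
Import numFieldNormedType.Exports.
Local Open Scope classical_set_scope.
Local Open Scope ring_scope.

(* Write theta_i = <theta, e_i>.  The coordinates of T^n theta are
   (1 - gamma lam_i)^n theta_i, so by Bessel's inequality
   sum_i (1 - gamma lam_i)^(2n) theta_i^2 <= |T^n theta|^2 <= 1 / (n^beta t_n).
   Multiplying by n^(beta - 1) and summing over n bounds
   sum_i theta_i^2 sum_n n^(beta - 1) (1 - gamma lam_i)^(2n) by sum_n 1 / (n t_n).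
   For the n in (m, 2m] with m = floor (1 / lam_i) one has 1 <= n lam_i <= 2,
   hence n^beta >= 2^(-|beta|) lam_i^(-beta) and (1 - gamma lam_i)^(2n) >= e^(-8);
   these m terms alone give sum_n n^(beta - 1) (1 - gamma lam_i)^(2n)
   >= K_beta lam_i^(-beta), and therefore sum_i lam_i^(-beta) theta_i^2 is finite. *)

Section inner_product.
Context {R : realType} {V : normedModType R} {ip : V -> V -> R}.
Hypothesis hip : inner_product_of_norm ip.

Lemma ipC u v : ip u v = ip v u. Proof. by case: hip. Qed.

Lemma ip_normE v : ip v v = `|v| ^+ 2. Proof. by case: hip. Qed.

Lemma ip0l w : ip 0 w = 0.
Proof. by case: hip => _ lin _; have := lin 1 0 0 w; rewrite scaler0 addr0 mul1r; lra. Qed.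

Lemma ipDl u v w : ip (u + v) w = ip u w + ip v w.
Proof. by case: hip => _ lin _; rewrite -[u]scale1r lin mul1r scale1r. Qed.

Lemma ipZl a u w : ip (a *: u) w = a * ip u w.
Proof. by case: hip => _ lin _; rewrite -[a *: u]addr0 lin ip0l addr0. Qed.

Lemma ipBl u v w : ip (u - v) w = ip u w - ip v w.
Proof. by rewrite -scaleN1r ipDl ipZl mulN1r. Qed.

Lemma ip_suml (J : Type) (s : seq J) (f : J -> V) w :
  ip (\sum_(j <- s) f j) w = \sum_(j <- s) ip (f j) w.
Proof. exact: (big_morph (ip^~ w) (fun u v => ipDl u v w) (ip0l w)). Qed.

Lemma bessel (I : eqType) (e : I -> V) (s : seq I) v :
  (forall i j, ip (e i) (e j) = (i == j)%:R) -> uniq s ->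
  \sum_(i <- s) ip v (e i) ^+ 2 <= `|v| ^+ 2.
Proof.
move=> e_on s_uniq; set y := \sum_(i <- s) ip v (e i) *: e i.
have ip_y_e j : j \in s -> ip y (e j) = ip v (e j).
  move=> js; rewrite ip_suml (bigD1_seq j) //= ipZl e_on eqxx mulr1.
  by rewrite big1 ?addr0 // => i /negbTE ij; rewrite ipZl e_on ij mulr0.
have ip_y_v : ip y v = \sum_(i <- s) ip v (e i) ^+ 2.
  by rewrite ip_suml; apply: eq_bigr => i _; rewrite ipZl (ipC (e i)) expr2.
have ip_y_y : ip y y = \sum_(i <- s) ip v (e i) ^+ 2.
  rewrite {1}/y ip_suml !big_seq; apply: eq_bigr => i si.
  by rewrite ipZl (ipC (e i)) ip_y_e // expr2.
have expand : ip (v - y) (v - y) = ip v v - 2 * ip y v + ip y y.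
  by rewrite ipBl (ipC v) (ipC y) !ipBl (ipC v y); ring.
have := sqr_ge0 `|v - y|; rewrite -(ip_normE (v - y)) expand ip_normE ip_y_v ip_y_y; lra.
Qed.

End inner_product.

Section decay_sums.
Context {R : realType}.
Implicit Types a b l y : R.

Lemma powR_lb_1_2 b y : 1 <= y <= 2 -> expR (- (`|b| * ln 2)) <= y `^ b.
Proof.
move=> /andP[y1 y2]; rewrite /powR gt_eqF ?ler_expR; last lra.
have ln_y0 : 0 <= ln y by apply: ln_ge0.
have ln_y2 : ln y <= ln 2 by rewrite ler_ln ?posrE //; lra.
by have [b0|b0] := leP 0 b; [rewrite ger0_norm // | rewrite ltr0_norm //]; nra.
Qed.

Lemma expR_le_1B a : 0 <= a <= 2^-1 -> expR (- (2 * a)) <= 1 - a.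
Proof.
move=> /andP[a0 a2]; have := expR_ge1Dx (2 * a); have := expR_gt0 (- (2 * a)).
have : expR (- (2 * a)) * expR (2 * a) = 1 by rewrite -expRD addNr expR0.
nra.
Qed.

Lemma expR_le_sqr1B_expn a n : 0 <= a <= 2^-1 -> a * n%:R <= 2 ->
  expR (-8) <= ((1 - a) ^+ 2) ^+ n.
Proof.
move=> a_itv an2; have E_le := @expR_le_1B a a_itv.
apply: (@le_trans _ _ ((expR (- (2 * a)) ^+ 2) ^+ n)).
  rewrite -!expRM_natr ler_expR; have := ler0n R n; nra.
by rewrite -!exprM lerXn2r ?nnegrE ?expR_ge0 //; lra.
Qed.

Definition decay_const b := expR (- (`|b| * ln 2)) * expR (-8) / 2.

Lemma decay_const_gt0 b : 0 < decay_const b.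
Proof. by rewrite !mulr_gt0 ?expR_gt0 ?invr_gt0. Qed.

Lemma decay_term_lb b l a (n : nat) : 0 < l <= 2^-1 -> 0 <= a <= l ->
  1 <= n%:R * l <= 2 ->
  2 * decay_const b * l `^ (- b) <= n%:R `^ b * ((1 - a) ^+ 2) ^+ n.
Proof.
move=> /andP[l0 l2] /andP[a0 al] nl.
have n_pow : n%:R `^ b = (n%:R * l) `^ b * l `^ (- b).
  rewrite powRM ?ler0n ?ltW // -mulrA powRN mulfV ?mulr1 //.
  by rewrite gt_eqF ?powR_gt0.
have an2 : a * n%:R <= 2 by have := ler0n R n; nra.
have q_lb := @expR_le_sqr1B_expn a n ltac:(lra) an2.
have -> : 2 * decay_const b = expR (- (`|b| * ln 2)) * expR (-8).
  by rewrite /decay_const mulrC divfK ?pnatr_eq0.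
rewrite n_pow mulrAC.
apply: ler_pM; rewrite ?mulr_ge0 ?expR_ge0 ?powR_ge0 //.
by rewrite ler_pM2r ?powR_gt0 ?powR_lb_1_2.
Qed.

Lemma decay_sum_lb b {l a} : 0 < l <= 2^-1 -> 0 <= a <= l ->
  exists N, forall N', (N <= N')%N ->
  decay_const b * l `^ (- b) <=
  \sum_(0 <= k < N') (k.+1)%:R `^ b / (k.+1)%:R * ((1 - a) ^+ 2) ^+ k.+1.
Proof.
move=> l_itv a_itv; have /andP[l0 l2] := l_itv.
have l_inv0 : 0 <= l^-1 by rewrite invr_ge0 ltW.
have /andP[m_le m_gt] := truncn_itv l_inv0; set m := Num.truncn l^-1 in m_le m_gt.
have l_inv2 : 2 <= l^-1 by rewrite -[2]invrK lef_pV2 ?posrE //; lra.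
have m0 : (0 < m)%N by rewrite truncn_gt0; lra.
have ml1 : m%:R * l <= 1 by rewrite -ler_pdivlMr // div1r.
have ml2 : 1 < m.+1%:R * l by rewrite -ltr_pdivrMr // div1r.
have q0 : 0 <= (1 - a) ^+ 2 by apply: sqr_ge0.
have term_ge0 k : 0 <= (k.+1)%:R `^ b / (k.+1)%:R * ((1 - a) ^+ 2) ^+ k.+1.
  by rewrite mulr_ge0 ?divr_ge0 ?powR_ge0 ?ler0n ?(exprn_ge0 _ q0).
exists (m + m)%N => N' mmN'.
have mN' : (m <= N')%N by apply: leq_trans mmN'; rewrite leq_addr.
rewrite (big_cat_nat (leq0n m) mN') (big_cat_nat (leq_addr m m) mmN') /=.
have block : decay_const b * l `^ (- b) <=
    \sum_(m <= k < m + m) (k.+1)%:R `^ b / (k.+1)%:R * ((1 - a) ^+ 2) ^+ k.+1.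
  have mR0 : 0 < m%:R :> R by rewrite ltr0n.
  have -> : decay_const b * l `^ (- b) =
      \sum_(m <= k < m + m) decay_const b * l `^ (- b) / m%:R.
    by rewrite sumr_const_nat addnK -[RHS]mulr_natr divfK ?gt_eqF.
  apply: ler_sum_nat => k /andP[mk kmm]; rewrite [leRHS]mulrAC.
  have n_ge : m.+1%:R <= k.+1%:R :> R by rewrite ler_nat.
  have n_le : k.+1%:R <= m%:R + m%:R :> R by rewrite -natrD ler_nat.
  have nl : 1 <= k.+1%:R * l <= 2 by apply/andP; split; nra.
  have := decay_term_lb b l a k.+1 l_itv a_itv nl.
  have : (m%:R + m%:R)^-1 <= k.+1%:R^-1 :> R by rewrite lef_pV2 ?posrE ?ltr0n //; lra.
  have := decay_const_gt0 b; have := powR_gt0 (- b) l0.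
  set K := decay_const b; set L := l `^ (- b); set X := _ * _ ^+ _.
  move=> L0 K0 inv_le X_ge.
  have -> : K * L / m%:R = 2 * K * L / (m%:R + m%:R) by field; lra.
  by apply: ler_pM => //; rewrite !mulr_ge0 // ltW.
apply: (le_trans block); rewrite addrCA lerDl.
by rewrite addr_ge0 // sumr_ge0.
Qed.

End decay_sums.

Lemma esum_lt_pinfty_of_sum_le (R : realType) (I : choiceType) (f : I -> R) (M : R) :
  (forall s : seq I, uniq s -> \sum_(i <- s) f i <= M) ->
  (\esum_(i in [set: I]) (f i)%:E < +oo)%E.
Proof.
move=> sum_le; apply: (le_lt_trans _ (ltry M)); apply: ge_ereal_sup => _ [A [finA _] <-].
by rewrite fsbig_finite // sumEFin lee_fin sum_le ?finmap.fset_uniq.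
Qed.

Lemma scaled_le_inv_mul (R : realFieldType) (p n X t : R) : 0 < p -> 0 < n ->
  X <= (p * t)^-1 -> p / n * X <= (n * t)^-1.
Proof.
move=> p0 n0 X_le; apply: le_trans (_ : p / n * (p * t)^-1 <= _).
  by rewrite ler_wpM2l // divr_ge0 // ltW.
by rewrite !invfM mulrACA mulfV ?gt_eqF // mul1r.
Qed.

Section spectral_iteration.
Context {R : realType} {V : normedModType R} {ip : V -> V -> R}.
Context {I : eqType} {e : I -> V} {lam : I -> R} {S : V -> V} {gamma : R}.
Hypotheses (hip : inner_product_of_norm ip)
  (e_orthonormal : forall i j, ip (e i) (e j) = (i == j)%:R)
  (S_coord : forall v i, ip (S v) (e i) = lam i * ip v (e i)).

Local Notation T := (fun v => v - gamma *: S v).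

Lemma iter_coord n v i :
  ip (iter n T v) (e i) = (1 - gamma * lam i) ^+ n * ip v (e i).
Proof.
elim: n => [|n IH]; first by rewrite mul1r.
by rewrite iterS (ipBl hip) (ipZl hip) S_coord IH exprS; ring.
Qed.

Lemma sum_iter_coord_le n v (s : seq I) : uniq s ->
  \sum_(i <- s) ((1 - gamma * lam i) ^+ 2) ^+ n * ip v (e i) ^+ 2
    <= `|iter n T v| ^+ 2.
Proof.
move=> s_uniq; rewrite (eq_bigr (fun i => ip (iter n T v) (e i) ^+ 2)).
  exact: (bessel hip).
by move=> i _; rewrite iter_coord [RHS]exprMn exprAC.
Qed.

Context {beta B : R} {t : nat -> R} {theta : V}.
Hypotheses (lam_itv : forall i, 0 < lam i <= 2^-1) (gamma_itv : 0 <= gamma <= 1).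
Hypothesis iter_decay : forall n, (0 < n)%N ->
  `|iter n T theta| ^+ 2 <= ((n%:R `^ beta) * t n)^-1.
Hypothesis series_le : forall N,
  series (fun n => ((n.+1)%:R * t n.+1)^-1) N <= B.

Lemma sum_weighted_coord_le (s : seq I) : uniq s ->
  \sum_(i <- s) lam i `^ (- beta) * ip theta (e i) ^+ 2 <= B / decay_const beta.
Proof.
move=> s_uniq; have /andP[gamma0 gamma1] := gamma_itv.
have a_itv i : 0 <= gamma * lam i <= lam i.
  by have /andP[lam0 _] := lam_itv i; apply/andP; split; nra.
have [Nf Nf_lb] := boolp.choice (fun i => decay_sum_lb beta (lam_itv i) (a_itv i)).
set N := \max_(i <- s) Nf i.
rewrite ler_pdivlMr ?decay_const_gt0 // (le_trans _ (series_le N)) // mulr_suml.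
apply: (@le_trans _ _ (\sum_(i <- s) \sum_(0 <= k < N)
    (k.+1)%:R `^ beta / (k.+1)%:R * ((1 - gamma * lam i) ^+ 2) ^+ k.+1
      * ip theta (e i) ^+ 2)).
  rewrite !big_seq; apply: ler_sum => i si.
  rewrite -mulr_suml mulrAC ler_wpM2r ?sqr_ge0 // mulrC.
  by apply: Nf_lb; apply: leq_bigmax_seq.
rewrite exchange_big /=; apply: ler_sum => k _.
under eq_bigr do rewrite -mulrA; rewrite -mulr_sumr.
apply: scaled_le_inv_mul; rewrite ?powR_gt0 ?ltr0n //.
exact: le_trans (sum_iter_coord_le _ _ _ s_uniq) (iter_decay _ (ltn0Sn k)).
Qed.

End spectral_iteration.

Theorem theorem2 (R : realType) (H : completeNormedModType R) (ip : H -> H -> R)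
  (d : measure_display) (Om : measurableType d) (P : probability Om R)
  (x : Om -> H) (S : H -> H) (I : choiceType) (e : I -> H) (lam : I -> R)
  (gamma : R) (theta : H) (beta : R) (t : nat -> R) :
  inner_product_of_norm ip ->
  borel_measurable_fun x ->
  (\int[P]_w ((`|x w| ^+ 2)%:E) < +oo)%E ->
  (forall th ph : H,
      ((ip (S th) ph)%:E = \int[P]_w ((ip th (x w) * ip (x w) ph)%:E))%E) ->
  orthonormal_basis ip e ->
  (forall i, S (e i) = lam i *: e i) ->
  (forall i, 0 < lam i < 2^-1) ->
  0 < gamma < 1 ->
  (forall n, (0 < n)%N -> 0 < t n) ->
  cvgn (series (fun n : nat => ((n.+1)%:R * t n.+1)^-1)) ->
  (forall n, (0 < n)%N ->
     `|iter n (fun v => v - gamma *: S v) theta| ^+ 2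
       <= ((n%:R `^ beta) * t n)^-1) ->
  (\esum_(i in [set: I]) ((lam i `^ (- beta)) * ip theta (e i) ^+ 2)%:E < +oo)%E.
Proof.
move=> hip _ _ S_cov [e_on _] S_e lam_itv gamma_itv t_gt0 series_cvg iter_decay.
have S_sym u v : ip (S u) v = ip u (S v).
  have : (ip (S u) v)%:E = (ip (S v) u)%:E.
    rewrite !S_cov; apply: eq_integral => w _.
    by rewrite (ipC hip u) (ipC hip v) mulrC.
  by move=> [->]; rewrite (ipC hip).
have S_coord v i : ip (S v) (e i) = lam i * ip v (e i).
  by rewrite S_sym S_e (ipC hip) (ipZl hip) (ipC hip).
have e_orthonormal i j : ip (e i) (e j) = (i == j)%:R.
  by rewrite e_on; case: eqVneq => [->|/eqP ij]; case: pselect.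
set u := fun n => ((n.+1)%:R * t n.+1)^-1.
have series_le N : series u N <= limn (series u).
  apply: nondecreasing_cvgn_le => //; apply: nondecreasing_series => n _ _.
  by rewrite /u invr_ge0 mulr_ge0 // ltW // t_gt0.
have lam_itv' i : 0 < lam i <= 2^-1 by have /andP[-> /ltW->] := lam_itv i.
have gamma_itv' : 0 <= gamma <= 1 by have /andP[/ltW-> /ltW->] := gamma_itv.
apply: esum_lt_pinfty_of_sum_le => s s_uniq.
exact: (sum_weighted_coord_le hip e_orthonormal S_coord lam_itv' gamma_itv'
  iter_decay series_le).
Qed.
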